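(* Let $A\in\mathfrak{B}_{n\times m}$. (a) If $X_1,X_2,\dots,X_s\in\mathcal{T}_n$ are such that $r(X_1X_2\cdots X_sA)<r(X_2X_3\cdots X_sA)<\cdots<r(X_sA)<r(A)$, then $c(X_1X_2\cdots X_sA)<c(A)$. (b) If $Y_1,Y_2,\dots,Y_t\in\mathcal{T}_m$ are such that $c(AY_1Y_2\cdots Y_t)<c(AY_2Y_3\cdots Y_t)<\cdots<c(AY_t)<c(A)$, then $r(AY_1Y_2\cdots Y_t)<r(A)$.
   Context: $\mathfrak{B}_{n\times m}$ denotes the set of all $n\times m$ matrices with entries in $\{0,1\}$. For $A=[a_{ij}]\in\mathfrak{B}_{n\times m}$, $r(A)=\langle x_1,\dots,x_n\rangle$ with $x_i=\sum_{j=1}^m a_{ij}2^{m-j}$ (row $i$ read as a binary number, first entry most significant), and $c(A)=\langle y_1,\dots,y_m\rangle$ with $y_j=\sum_{i=1}^n a_{ij}2^{n-i}$ (column $j$ read as a binary number, top entry most significant). Tuples are compared in the lexicographic order $<$. $\mathcal{T}_k$ denotes the set of $k\times k$ transposition matrices, i.e. permutation matrices which, multiplied from the left, interchange exactly two rows of a matrix, and multiplied from the right, interchange exactly two columns. *)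

From mathcomp Require Import all_boot all_order all_algebra all_fingroup.
Set Implicit Arguments. Unset Strict Implicit. Unset Printing Implicit Defensive.
Import GRing.Theory.
Local Open Scope ring_scope.

(* 0/1 matrices are represented as integer matrices with entries in {0,1},
   so that products with permutation matrices are ordinary matrix products. *)
Definition is_binary_mx (n m : nat) (A : 'M[int]_(n, m)) : Prop :=
  forall i j, A i j = 0 \/ A i j = 1.

Definition is_transposition_mx (k : nat) (X : 'M[int]_k) : Prop :=
  exists i j : 'I_k, i != j /\ X = tperm_mx i j.

Definition row_val (n m : nat) (A : 'M[int]_(n, m)) (i : 'I_n) : nat :=
  (\sum_(j < m) `|A i j|%N * 2 ^ (m - j.+1))%N.

Definition col_val (n m : nat) (A : 'M[int]_(n, m)) (j : 'I_m) : nat :=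
  (\sum_(i < n) `|A i j|%N * 2 ^ (n - i.+1))%N.

Definition rvec (n m : nat) (A : 'M[int]_(n, m)) : seq nat :=
  [seq row_val A i | i <- enum 'I_n].
Definition cvec (n m : nat) (A : 'M[int]_(n, m)) : seq nat :=
  [seq col_val A j | j <- enum 'I_m].

Fixpoint lexlt (s t : seq nat) : bool :=
  match s, t with
  | [::], [::] => false
  | [::], _ :: _ => true
  | _ :: _, [::] => false
  | x :: s', y :: t' => (x < y)%N || ((x == y) && lexlt s' t')
  end.

Definition mprod (k : nat) (Xs : seq 'M[int]_k) : 'M[int]_k :=
  foldr (fun X P => X *m P) 1%:M Xs.

From mathcomp Require Import all_boot all_order all_algebra all_fingroup zify.
Set Implicit Arguments. Unset Strict Implicit. Unset Printing Implicit Defensive.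

(* Swapping rows a < b lowers the row tuple exactly when row b is smaller
   than row a as a binary number.  Their first differing digit is then a
   column k with a 1 in row a and a 0 in row b; the swap leaves the columns
   before k alone and moves that 1 of column k down from position a to
   position b, so the column tuple drops as well.  A chain of such swaps
   therefore lowers the column tuple at every step, and transposing gives
   the statement with rows and columns exchanged. *)

Lemma lexlt_trans s t u : lexlt s t -> lexlt t u -> lexlt s u.
Proof.
elim: s t u => [|x s IH] [|y t] [|z u] //=.
case/orP => [lt_xy|/andP[/eqP-> st]]; case/orP => [lt_yz|/andP[/eqP<- tu]].
- by rewrite (ltn_trans lt_xy lt_yz).
- by rewrite lt_xy.
- by rewrite lt_yz.
- by rewrite eqxx (IH _ _ st tu) orbT.
Qed.

Lemma lexlt_chain (F : nat -> seq nat) s :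
  (0 < s)%N -> (forall k, (k < s)%N -> lexlt (F k) (F k.+1)) -> lexlt (F 0%N) (F s).
Proof.
elim: s => [//|[_ _ /(_ 0%N isT) //|s IH] _ step].
exact: lexlt_trans (IH isT (fun k lt_ks => step k (ltnW lt_ks))) (step s.+1 _).
Qed.

Lemma lexlt_mapP n (f g : 'I_n -> nat) :
  lexlt [seq f i | i <- enum 'I_n] [seq g i | i <- enum 'I_n] <->
  exists p : 'I_n, (forall q : 'I_n, (q < p)%N -> f q = g q) /\ (f p < g p)%N.
Proof.
elim: n f g => [|n IH] f g.
  by rewrite enum_ord0; split=> // -[[]].
rewrite enum_ordSl /= -!map_comp -enumT.
have {}IH := IH (f \o lift ord0) (g \o lift ord0).
split.
  case/orP => [lt0|/andP[/eqP eq0 /IH[p [eq_lt lt_p]]]].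
    by exists ord0; split=> // q.
  exists (lift ord0 p); split=> // q.
  by case: (unliftP ord0 q) => [q' ->|->] //; rewrite /= !ltnS => /eq_lt.
case=> p [eq_lt]; case: (unliftP ord0 p) eq_lt => [p' ->|->] eq_lt lt_p; last by rewrite lt_p.
rewrite eq_lt // eqxx; apply/orP; right; apply/IH.
by exists p'; split=> // q lt_q; apply: eq_lt.
Qed.

Definition bin_val m (b : 'I_m -> nat) : nat := (\sum_(j < m) b j * 2 ^ (m - j.+1))%N.

Lemma bin_val_lt_exp m (b : 'I_m -> nat) : (forall j, b j <= 1)%N -> (bin_val b < 2 ^ m)%N.
Proof.
elim: m b => [|m IH] b b01; first by rewrite /bin_val big_ord0.
rewrite /bin_val big_ord_recl subSS subn0 expnS mul2n -addnn -addnS.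
apply: leq_add; first by rewrite -[leqRHS]mul1n leq_mul2r b01 orbT.
under eq_bigr => i _ do rewrite subSS.
exact: IH.
Qed.

Lemma bin_val_lt_first_digit m (b c : 'I_m -> nat) :
  (forall j, b j <= 1)%N -> (forall j, c j <= 1)%N -> (bin_val b < bin_val c)%N ->
  exists k : 'I_m, (forall q : 'I_m, (q < k)%N -> b q = c q) /\ b k = 0%N /\ c k = 1%N.
Proof.
elim: m b c => [|m IH] b c b01 c01; first by rewrite /bin_val !big_ord0.
rewrite /bin_val !big_ord_recl !subSS subn0.
under eq_bigr => i _ do rewrite subSS.
under [X in (_ < _ + X)%N]eq_bigr => i _ do rewrite subSS.
move: (b01 ord0) (c01 ord0).
case E1: (b ord0) => [|[|//]] _; case E2: (c ord0) => [|[|//]] _ lt_bc.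
- rewrite !mul0n !add0n in lt_bc.
  have [k [eq_lt [bk ck]]] := IH _ _ (fun j => b01 _) (fun j => c01 _) lt_bc.
  exists (lift ord0 k); split=> // q.
  case: (unliftP ord0 q) => [q' ->|->]; last by rewrite E1 E2.
  by rewrite /= !ltnS => /eq_lt.
- by exists ord0; split.
- exfalso; move: lt_bc; apply/negP; rewrite -leqNgt mul0n add0n mul1n.
  exact/(leq_trans _ (leq_addr _ _))/ltnW/bin_val_lt_exp.
- rewrite !mul1n ltn_add2l in lt_bc.
  have [k [eq_lt [bk ck]]] := IH _ _ (fun j => b01 _) (fun j => c01 _) lt_bc.
  exists (lift ord0 k); split=> // q.
  case: (unliftP ord0 q) => [q' ->|->]; last by rewrite E1 E2.
  by rewrite /= !ltnS => /eq_lt.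
Qed.

Lemma row_val_xrow n m (B : 'M[int]_(n, m)) a b r :
  row_val (xrow a b B) r = row_val B (tperm a b r).
Proof. by apply: eq_bigr => j _; rewrite /xrow /row_perm mxE. Qed.

Lemma row_val_lt_of_rvec_xrow_lt n m (B : 'M[int]_(n, m)) (a b : 'I_n) :
  (a < b)%N -> lexlt (rvec (xrow a b B)) (rvec B) -> (row_val B b < row_val B a)%N.
Proof.
move=> lt_ab /lexlt_mapP[p [eq_lt]]; rewrite row_val_xrow.
have [->|npa] := eqVneq p a; first by rewrite tpermL.
have [epb|npb] := eqVneq p b.
  by rewrite epb tpermR -(eq_lt a) ?epb // row_val_xrow tpermL ltnn.
by rewrite tpermD ?ltnn // eq_sym.
Qed.

Lemma cvec_xrow_lt_of_row_val_lt n m (B : 'M[int]_(n, m)) (a b : 'I_n) :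
  is_binary_mx B -> (a < b)%N -> (row_val B b < row_val B a)%N ->
  lexlt (cvec (xrow a b B)) (cvec B).
Proof.
move=> B01 lt_ab lt_ba.
have abs01 i j : (`|B i j|%N <= 1)%N by case: (B01 i j) => ->.
have [k [eq_lt [bk ak]]] := bin_val_lt_first_digit (abs01 b) (abs01 a) lt_ba.
have xrow_entry r j : xrow a b B r j = B (tperm a b r) j by rewrite /xrow /row_perm mxE.
have nab : a != b by rewrite neq_ltn lt_ab.
apply/lexlt_mapP; exists k; split.
  move=> q /eq_lt eq_q; apply: eq_bigr => r _; rewrite xrow_entry.
  by case: tpermP => [->|->|] //; rewrite eq_q.
have split_ab (f : 'I_n -> nat) :
    (\sum_r f r = f a + f b + \sum_(r | (r != a) && (r != b)) f r)%N.
  by rewrite (bigD1 a) //= (bigD1 b) 1?eq_sym //= addnA.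
rewrite /col_val /bin_val !split_ab.
rewrite !xrow_entry tpermL tpermR bk ak mul0n mul1n add0n addn0.
under eq_bigr => r /andP[nra nrb] do rewrite xrow_entry tpermD 1?eq_sym //.
rewrite mul1n ltn_add2r ltn_exp2l //.
have := ltn_ord b; lia.
Qed.

Lemma cvec_xrow_lt n m (B : 'M[int]_(n, m)) (a b : 'I_n) :
  is_binary_mx B -> a != b ->
  lexlt (rvec (xrow a b B)) (rvec B) -> lexlt (cvec (xrow a b B)) (cvec B).
Proof.
move=> B01 nab; wlog lt_ab : a b nab / (a < b)%N => [sym_ab|].
  have [lt_ab|lt_ba|/val_inj eq_ab] := ltngtP a b; first exact: sym_ab.
    by rewrite /xrow tpermC; apply: sym_ab; rewrite // eq_sym.
  by rewrite eq_ab eqxx in nab.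
by move/(row_val_lt_of_rvec_xrow_lt lt_ab); apply: cvec_xrow_lt_of_row_val_lt.
Qed.

Lemma rvec_tr n m (B : 'M[int]_(n, m)) : rvec B^T = cvec B.
Proof. by apply: eq_map => i; apply: eq_bigr => j _; rewrite mxE. Qed.

Lemma cvec_tr n m (B : 'M[int]_(n, m)) : cvec B^T = rvec B.
Proof. by apply: eq_map => j; apply: eq_bigr => i _; rewrite mxE. Qed.

Lemma is_binary_mx_tr n m (B : 'M[int]_(n, m)) : is_binary_mx B -> is_binary_mx B^T.
Proof. by move=> B01 i j; rewrite mxE. Qed.

Lemma rvec_xcol_lt n m (B : 'M[int]_(n, m)) (a b : 'I_m) :
  is_binary_mx B -> a != b ->
  lexlt (cvec (xcol a b B)) (cvec B) -> lexlt (rvec (xcol a b B)) (rvec B).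
Proof.
move=> B01 nab; have := cvec_xrow_lt (is_binary_mx_tr B01) nab.
by rewrite -tr_xcol !rvec_tr !cvec_tr.
Qed.

Lemma mprod_perm_mx k (Xs : seq 'M[int]_k) :
  (forall X, X \in Xs -> is_transposition_mx X) -> exists s, mprod Xs = perm_mx s.
Proof.
elim: Xs => [|X Xs IH] Xs_tp; first by exists 1%g; rewrite perm_mx1.
have [s Ps] := IH (fun Y Y_in => Xs_tp Y (mem_behead (s := X :: Xs) Y_in)).
have [a [b [_ ->]]] := Xs_tp X (mem_head _ _).
by exists (tperm a b * s)%g; rewrite /= Ps perm_mxM.
Qed.

Lemma is_binary_mx_perm_mulmx n m (B : 'M[int]_(n, m)) s :
  is_binary_mx B -> is_binary_mx (perm_mx s *m B).
Proof. by move=> B01 i j; rewrite -row_permE mxE. Qed.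

Lemma is_binary_mx_mulmx_perm n m (B : 'M[int]_(n, m)) s :
  is_binary_mx B -> is_binary_mx (B *m perm_mx s).
Proof. by move=> B01 i j; rewrite -[s]invgK -col_permE mxE. Qed.

Lemma tperm_mx_mul_perm_mx k (a b : 'I_k) (s : 'S_k) :
  (tperm_mx a b *m perm_mx s = perm_mx s *m tperm_mx (s a) (s b) :> 'M[int]_k)%R.
Proof. by rewrite /tperm_mx -!perm_mxM conjgC tpermJ. Qed.

Lemma cvec_lt_of_rvec_chain n m (A : 'M[int]_(n, m)) (Xs : seq 'M[int]_n) :
  is_binary_mx A -> (0 < size Xs)%N ->
  (forall X, X \in Xs -> is_transposition_mx X) ->
  (forall k, (k < size Xs)%N ->
     lexlt (rvec (mprod (drop k Xs) *m A)) (rvec (mprod (drop k.+1 Xs) *m A))) ->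
  lexlt (cvec (mprod Xs *m A)) (cvec A).
Proof.
move=> A01 Xs_gt0 Xs_tp rchain.
pose F k := cvec (mprod (drop k Xs) *m A).
suff cchain k : (k < size Xs)%N -> lexlt (F k) (F k.+1).
  by have := lexlt_chain Xs_gt0 cchain; rewrite /F drop0 drop_size mul1mx.
move=> lt_k; have [a [b [nab Xk]]] := Xs_tp _ (mem_nth (1%:M)%R lt_k).
have [s Ps] : exists s, mprod (drop k.+1 Xs) = perm_mx s.
  by apply: mprod_perm_mx => X /mem_drop; apply: Xs_tp.
have Ek : (mprod (drop k Xs) *m A = xrow a b (mprod (drop k.+1 Xs) *m A))%R.
  by rewrite (drop_nth (1%:M)%R lt_k) /= Xk xrowE mulmxA.
rewrite /F Ek; apply: cvec_xrow_lt nab _; first by rewrite Ps; apply: is_binary_mx_perm_mulmx.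
by rewrite -Ek; apply: rchain.
Qed.

Lemma rvec_lt_of_cvec_chain n m (A : 'M[int]_(n, m)) (Ys : seq 'M[int]_m) :
  is_binary_mx A -> (0 < size Ys)%N ->
  (forall Y, Y \in Ys -> is_transposition_mx Y) ->
  (forall k, (k < size Ys)%N ->
     lexlt (cvec (A *m mprod (drop k Ys))) (cvec (A *m mprod (drop k.+1 Ys)))) ->
  lexlt (rvec (A *m mprod Ys)) (rvec A).
Proof.
move=> A01 Ys_gt0 Ys_tp cchain.
pose F k := rvec (A *m mprod (drop k Ys)).
suff rchain k : (k < size Ys)%N -> lexlt (F k) (F k.+1).
  by have := lexlt_chain Ys_gt0 rchain; rewrite /F drop0 drop_size mulmx1.
move=> lt_k; have [a [b [nab Yk]]] := Ys_tp _ (mem_nth (1%:M)%R lt_k).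
have [s Ps] : exists s, mprod (drop k.+1 Ys) = perm_mx s.
  by apply: mprod_perm_mx => Y /mem_drop; apply: Ys_tp.
have Ek : (A *m mprod (drop k Ys) = xcol (s a) (s b) (A *m mprod (drop k.+1 Ys)))%R.
  by rewrite (drop_nth (1%:M)%R lt_k) /= Yk Ps tperm_mx_mul_perm_mx xcolE !mulmxA.
have snab : s a != s b by rewrite (inj_eq perm_inj).
rewrite /F Ek; apply: rvec_xcol_lt snab _.
  by rewrite Ps; apply: is_binary_mx_mulmx_perm.
by rewrite -Ek; apply: cchain.
Qed.

Theorem theorem1 (n m : nat) (A : 'M[int]_(n, m)) :
  is_binary_mx A ->
  (forall Xs : seq 'M[int]_n,
      (0 < size Xs)%N ->
      (forall X, X \in Xs -> is_transposition_mx X) ->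
      (forall k, (k < size Xs)%N ->
         lexlt (rvec (mprod (drop k Xs) *m A)) (rvec (mprod (drop k.+1 Xs) *m A))) ->
      lexlt (cvec (mprod Xs *m A)) (cvec A)) /\
  (forall Ys : seq 'M[int]_m,
      (0 < size Ys)%N ->
      (forall Y, Y \in Ys -> is_transposition_mx Y) ->
      (forall k, (k < size Ys)%N ->
         lexlt (cvec (A *m mprod (drop k Ys))) (cvec (A *m mprod (drop k.+1 Ys)))) ->
      lexlt (rvec (A *m mprod Ys)) (rvec A)).
Proof.
move=> A01; split=> Zs; [exact: cvec_lt_of_rvec_chain | exact: rvec_lt_of_cvec_chain].
Qed.
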